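(* Let $I$ be a group, $f:I\to G$ a group epimorphism with kernel $K$, and $\varphi:I\to\mathbb R^m$ a surjective quasimorphism such that (i) $\varphi(uv)=\varphi(u)+\varphi(v)$ for all $u\in K$, $v\in I$, and (ii) $A:=\varphi(K)\subset\mathbb Z^m$. Suppose $C_\varphi+D_\varphi>0$. Then (1) $cl(w)\ge\dfrac{\theta_w+D_\varphi}{C_\varphi+D_\varphi}$ for every $w\in G$, $w\ne e$; (2) if $G\ne\{e\}$, then $cld\,G\ge\dfrac{\theta_\varphi+D_\varphi}{C_\varphi+D_\varphi}$.
   Context: $\mathbb R^m$ carries the norm $\|x\|=\max_i|x_i|$. A map $\varphi:I\to\mathbb R^m$ is a quasimorphism if its defect $D_\varphi:=\sup_{a,b\in I}\|\varphi(ab)-\varphi(a)-\varphi(b)\|$ is finite. $C_\varphi:=\sup\{\|\varphi([a,b])\|: a,b\in I\}$. Under (i), $A$ is a subgroup of $\mathbb Z^m$ and there is a well-defined surjective map $\widehat\varphi:G\to\mathbb R^m/A$, $\widehat\varphi(w)=\varphi(v)+A$ for any $v\in f^{-1}(w)$. For $w\in G$, $\theta_w:=\min\{\|y\|: y\in\widehat\varphi(w)\}$ (a minimum over an affine lattice), and $\theta_\varphi:=\sup_{w\in G}\theta_w$. $cl$ is the commutator length in $G$ ($\infty$ outside $[G,G]$) and $cld\,G=\sup cl(G)$. *)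

From HB Require Import structures.
From mathcomp Require Import all_boot all_order all_algebra.
From mathcomp Require Import all_classical all_reals ereal.
Set Implicit Arguments. Unset Strict Implicit. Unset Printing Implicit Defensive.
Import Order.TTheory GRing.Theory Num.Theory.
Local Open Scope classical_set_scope.
Local Open Scope ring_scope.

Section Defs.
Variables (R : realType) (m : nat).

Definition vnorm (x : 'rV[R]_m) : R := \big[Num.max/0]_(i < m) `|x ord0 i|.

Definition int_vec (y : 'rV[R]_m) : Prop := forall i, exists z : int, y ord0 i = z%:~R.

Variables (I G : groupType).

Definition group_epi (f : I -> G) : Prop :=
  (forall x y, f (x * y)%g = (f x * f y)%g) /\ (forall w, exists x, f x = w).

Definition defect_set (phi : I -> 'rV[R]_m) : set R :=
  [set r | exists a b, r = vnorm (phi (a * b)%g - phi a - phi b)].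

Definition is_quasimorphism (phi : I -> 'rV[R]_m) : Prop := has_ubound (defect_set phi).

Definition Dphi (phi : I -> 'rV[R]_m) : R := sup (defect_set phi).

Definition Cphi (phi : I -> 'rV[R]_m) : R :=
  sup [set r | exists a b, r = vnorm (phi [~ a, b]%g)].

Definition Aset (f : I -> G) (phi : I -> 'rV[R]_m) : set 'rV[R]_m :=
  [set phi u | u in [set u | f u = 1%g]].

Definition hatphi (f : I -> G) (phi : I -> 'rV[R]_m) (w : G) : set 'rV[R]_m :=
  [set y | exists v, f v = w /\ exists a, Aset f phi a /\ y = phi v + a].

Definition theta (f : I -> G) (phi : I -> 'rV[R]_m) (w : G) : R :=
  inf [set vnorm y | y in hatphi f phi w].

Definition theta_sup (f : I -> G) (phi : I -> 'rV[R]_m) : \bar R :=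
  ereal_sup [set (theta f phi w)%:E | w in [set: G]].

End Defs.

Section CL.
Variables (R : realType) (G : groupType).

Definition comm_prod (w : G) (n : nat) : Prop :=
  exists s : seq (G * G), size s = n /\
    w = foldr (fun p acc => ([~ p.1, p.2] * acc)%g) 1%g s.

(* commutator length, +oo outside [G,G] *)
Definition cl (w : G) : \bar R :=
  ereal_inf [set (n%:R)%:E | n in [set n | comm_prod w n]].

Definition cld : \bar R := ereal_sup [set cl w | w in [set: G]].

End CL.

(** Lift a product of [n] commutators in [G] commutator by commutator to [I].
    Each commutator [[a, b]] of [I] has [||phi [a, b]|| <= C], and each
    multiplication costs at most [D], so the lift [v] satisfies
    [||phi v|| + D <= n (C + D)].  Since [phi v] is a point of [hatphi w],
    [theta w <= ||phi v||], which gives (1); (2) follows by taking suprema, the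
    trivial element being harmless because [theta 1 = 0]. *)

From HB Require Import structures.
From mathcomp Require Import all_boot all_order all_algebra.
From mathcomp Require Import all_classical all_reals ereal.
From mathcomp Require Import lra.

Set Implicit Arguments.
Unset Strict Implicit.
Unset Printing Implicit Defensive.
Import Order.TTheory GRing.Theory Num.Theory.
Local Open Scope classical_set_scope.
Local Open Scope ring_scope.

Section MaxNorm.
Variables (R : realType) (m : nat).
Implicit Types x y : 'rV[R]_m.

Lemma vnorm_ge0 x : 0 <= vnorm x.
Proof. by rewrite /vnorm; elim/big_rec: _ => // i y _ y0; rewrite le_max y0 orbT. Qed.

Lemma vnorm_coord x i : `|x ord0 i| <= vnorm x.
Proof. exact: le_bigmax. Qed.

Lemma vnorm0 : vnorm (0 : 'rV[R]_m) = 0.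
Proof.
by apply/le_anti; rewrite vnorm_ge0 andbT; apply: bigmax_le => // i _; rewrite mxE normr0.
Qed.

Lemma vnormN x : vnorm (- x) = vnorm x.
Proof. by apply: eq_bigr => i _; rewrite mxE normrN. Qed.

Lemma vnormD x y : vnorm (x + y) <= vnorm x + vnorm y.
Proof.
apply: bigmax_le => [|i _]; first by rewrite addr_ge0 ?vnorm_ge0.
by rewrite mxE (le_trans (ler_normD _ _)) // lerD ?vnorm_coord.
Qed.

Lemma vnormB x y : vnorm (x - y) <= vnorm x + vnorm y.
Proof. by rewrite -(vnormN y) vnormD. Qed.

End MaxNorm.

Section Quasimorphism.
Variables (R : realType) (m : nat) (I : groupType) (phi : I -> 'rV[R]_m).
Hypothesis phi_qm : is_quasimorphism phi.

Lemma vnorm_defect_le a b : vnorm (phi (a * b)%g - phi a - phi b) <= Dphi phi.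
Proof.
apply: sup_upper_bound; last by exists a, b.
by split=> //; exists (vnorm (phi (1 * 1)%g - phi 1%g - phi 1%g)), 1%g, 1%g.
Qed.

Lemma vnorm_phiM_le a b :
  vnorm (phi (a * b)%g) <= vnorm (phi a) + vnorm (phi b) + Dphi phi.
Proof.
have -> : phi (a * b)%g = (phi (a * b)%g - phi a - phi b) + phi a + phi b.
  by rewrite addrAC !subrK.
apply: le_trans (vnormD _ _) _; rewrite [leRHS]addrAC lerD2r.
by apply: le_trans (vnormD _ _) _; rewrite [leLHS]addrC lerD2l vnorm_defect_le.
Qed.

Hypothesis phi1 : phi 1%g = 0.

(* [phi [a, b]] is an alternating sum of five defects, two of which come from
   [phi (x * x^-1) = 0]. *)
Lemma vnorm_phi_commg_le a b : vnorm (phi [~ a, b]%g) <= 5 * Dphi phi.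
Proof.
pose d x y := phi (x * y)%g - phi x - phi y.
have d_le x y : vnorm (d x y) <= Dphi phi := vnorm_defect_le x y.
have -> : phi [~ a, b]%g =
    d a^-1%g (b^-1 * (a * b))%g + d b^-1%g (a * b)%g + d a b
    - d a a^-1%g - d b b^-1%g.
  by apply/rowP => i; rewrite /d !mulgV phi1 !mxE; lra.
rewrite (_ : 5 * Dphi phi =
  Dphi phi + Dphi phi + Dphi phi + Dphi phi + Dphi phi); last by lra.
apply: le_trans (vnormB _ _) (lerD _ (d_le _ _)).
apply: le_trans (vnormB _ _) (lerD _ (d_le _ _)).
apply: le_trans (vnormD _ _) (lerD _ (d_le _ _)).
exact: le_trans (vnormD _ _) (lerD (d_le _ _) (d_le _ _)).
Qed.

Lemma vnorm_phi_commg_le_Cphi a b : vnorm (phi [~ a, b]%g) <= Cphi phi.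
Proof.
apply: sup_upper_bound; last by exists a, b.
split; first by exists (vnorm (phi [~ 1, 1]%g)), 1%g, 1%g.
by exists (5 * Dphi phi) => _ [x [y ->]]; apply: vnorm_phi_commg_le.
Qed.

End Quasimorphism.

Lemma ereal_sup_addr_mulr_le (R : realType) (T : Type) (g : T -> R)
    (d c : R) (M : \bar R) :
  0 < c -> (forall t, ((g t + d) * c)%:E <= M)%E ->
  ((ereal_sup [set (g t)%:E | t in [set: T]] + d%:E) * c%:E <= M)%E.
Proof.
move=> c0 gM; case: M gM => [r| |] gM; last 2 first.
- by rewrite leey.
- suff -> : ereal_sup [set (g t)%:E | t in [set: T]] = -oo%E.
    by rewrite /= mulNyr gtr0_sg // mul1e.
  by apply/eqP; rewrite -leeNy_eq; apply: ge_ereal_sup => _ [t _ <-]; have := gM t.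
have sup_le : (ereal_sup [set (g t)%:E | t in [set: T]] <= (r / c - d)%:E)%E.
  apply: ge_ereal_sup => _ [t _ <-]; rewrite lee_fin.
  by have := gM t; rewrite lee_fin -ler_pdivlMr //; lra.
case: (ereal_sup _) sup_le => [s| |] //= sup_le.
  by rewrite -EFinD -EFinM lee_fin -ler_pdivlMr //; rewrite lee_fin in sup_le; lra.
by rewrite mulNyr gtr0_sg // mul1e leNye.
Qed.

Section CommutatorLength.
Variables (R : realType) (m : nat) (I G : groupType).
Variables (f : I -> G) (phi : I -> 'rV[R]_m).
Hypotheses (fM : {morph f : x y / (x * y)%g}) (f_surj : forall w, exists v, f v = w).
Hypothesis phi_qm : is_quasimorphism phi.
Hypothesis phi_kerM : forall u v, f u = 1%g -> phi (u * v)%g = phi u + phi v.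

Lemma gmorph1 : f 1%g = 1%g.
Proof. by apply: (@mulIg _ (f 1%g)); rewrite -fM !mul1g. Qed.

HB.instance Definition _ := isUMagmaMorphism.Build I G f (gmorph1, fM).

Lemma phi1 : phi 1%g = 0.
Proof. by apply: (addrI (phi 1%g)); rewrite -phi_kerM ?gmorph1 // mulg1 addr0. Qed.

Local Notation D := (Dphi phi).
Local Notation C := (Cphi phi).

Lemma phi_mem_hatphi v : hatphi f phi (f v) (phi v).
Proof.
exists v; split=> //; exists 0; split; last by rewrite addr0.
by exists 1%g; [exact: gmorph1 | exact: phi1].
Qed.

Lemma theta_le_vnorm v : theta f phi (f v) <= vnorm (phi v).
Proof.
apply: ge_inf; last by exists (phi v) => //; apply: phi_mem_hatphi.
by exists 0 => _ [y _ <-]; apply: vnorm_ge0.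
Qed.

Lemma theta_ge0 w : 0 <= theta f phi w.
Proof.
have [v <-] := f_surj w.
apply: lb_le_inf; last by move=> _ [y _ <-]; apply: vnorm_ge0.
by exists (vnorm (phi v)), (phi v) => //; apply: phi_mem_hatphi.
Qed.

Lemma theta1 : theta f phi 1%g = 0.
Proof.
apply/le_anti; rewrite theta_ge0 andbT.
by have := theta_le_vnorm 1%g; rewrite gmorph1 phi1 vnorm0.
Qed.

Lemma comm_prod_lift w n : comm_prod w n.+1 ->
  exists v, f v = w /\ vnorm (phi v) + D <= n.+1%:R * (C + D).
Proof.
case=> s [sz ->{w}]; elim: s n sz => [|[x y] s IHs] n //= [sz].
have [a <-] := f_surj x; have [b <-] := f_surj y.
have comm_le := vnorm_phi_commg_le_Cphi phi_qm phi1 a b.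
case: n sz => [|n] sz.
  exists [~ a, b]%g; rewrite (size0nil sz) /= mulg1 gmulfR; split=> //.
  by rewrite mul1r lerD2r.
have [v [<- v_le]] := IHs n sz; exists ([~ a, b] * v)%g.
rewrite fM gmulfR; split=> //.
by have := vnorm_phiM_le phi_qm [~ a, b]%g v; rewrite mulrSr mulrDl mul1r; lra.
Qed.

Hypothesis CD_gt0 : 0 < C + D.

Lemma cl_ge w : w <> 1%g ->
  (((theta f phi w + D) / (C + D))%:E <= cl R w)%E.
Proof.
move=> w1; apply/ereal_infP => _ [[|n] wn <-].
  by case: wn => s [/size0nil -> w_eq1]; case: w1.
have [v [<- v_le]] := comm_prod_lift wn.
by rewrite lee_fin ler_pdivrMr //; have := theta_le_vnorm v; lra.
Qed.

Lemma cld_ge : (exists w : G, w <> 1%g) ->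
  ((theta_sup f phi + D%:E) * ((C + D)^-1)%:E <= cld R G)%E.
Proof.
move=> [w0 w01]; apply: ereal_sup_addr_mulr_le; first by rewrite invr_gt0.
have cl_le_cld w : w <> 1%g ->
    (((theta f phi w + D) / (C + D))%:E <= cld R G)%E.
  by move=> w1; apply: le_trans (cl_ge w1) _; apply: ereal_sup_ubound; exists w.
move=> w; have [->|w1] := eqVneq w 1%g; last exact/cl_le_cld/eqP.
apply: le_trans (cl_le_cld _ w01); rewrite lee_fin ler_pM2r ?invr_gt0 //.
by rewrite lerD2r theta1 theta_ge0.
Qed.

End CommutatorLength.

Theorem proposition2 (R : realType) (m : nat) (I G : groupType)
    (f : I -> G) (phi : I -> 'rV[R]_m) :
  group_epi f ->
  (forall y, exists x, phi x = y) ->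
  is_quasimorphism phi ->
  (forall u v, f u = 1%g -> phi (u * v)%g = phi u + phi v) ->
  (forall u, f u = 1%g -> int_vec (phi u)) ->
  0 < Cphi phi + Dphi phi ->
  (forall w : G, w <> 1%g ->
     ((theta f phi w + Dphi phi) / (Cphi phi + Dphi phi))%:E <= cl R w)%E /\
  ((exists w : G, w <> 1%g) ->
     ((theta_sup f phi + (Dphi phi)%:E) * ((Cphi phi + Dphi phi)^-1)%:E
        <= cld R G)%E).
Proof.
move=> [fM f_surj] _ phi_qm phi_kerM _ CD_gt0.
by split; [exact: cl_ge | exact: cld_ge].
Qed.
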